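(* Assume (ER$\sharp$) for some $\sharp\in\{cy,ra\}$ and (NE), and let $H'_{\mathcal S}=-\beta_{\rm ref}^{-1}\log\rho_{+,0}$. Then for all $j\in\{1,\dots,M\}$, $t\in\mathbb R$ and all operators $\rho$ on $\mathcal H_{\mathcal S}$, $\mathcal L_j(e^{-itH'_{\mathcal S}}\rho e^{itH'_{\mathcal S}})=e^{-itH'_{\mathcal S}}\mathcal L_j(\rho)e^{itH'_{\mathcal S}}$.
   Context: Finite-dimensional $\mathcal H_{\mathcal S},\mathcal H_{\mathcal E_j}$ ($j=1..M$), self-adjoint $H_{\mathcal S},H_{\mathcal E_j}$, self-adjoint $V_j$, $\tau_j>0$, $U_j=e^{-i\tau_j(H_{\mathcal S}\otimes\mathrm{Id}+\mathrm{Id}\otimes H_{\mathcal E_j}+V_j)}$; $\beta_{\rm ref}>0$; for $\boldsymbol\zeta\in\mathbb R^M$, $\rho_{\mathcal E_j}$ Gibbs state of $H_{\mathcal E_j}$ at $\beta_{\rm ref}-\zeta_j$, $\mathcal L_j(\rho)=\mathrm{Tr}_{\mathcal H_{\mathcal E_j}}(U_j(\rho\otimes\rho_{\mathcal E_j})U_j^* )$, $\mathcal L_{cy}=\mathcal L_M\circ\cdots\circ\mathcal L_1$, $\mathcal L_{ra}=\frac1M\sum\mathcal L_j$. Primitive: for some $n$, products of $n$ Kraus operators span all operators. (ER$\sharp$): $\mathcal L_{\sharp,\boldsymbol\zeta}$ primitive for some $\boldsymbol\zeta$. (NE): there is $\zeta\mapsto\rho_{+,\zeta}$ (states on $\mathcal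 H_{\mathcal S}$) with $U_j(\rho_{+,\zeta}\otimes\rho_{\mathcal E_j,\zeta})U_j^*=\rho_{+,\zeta}\otimes\rho_{\mathcal E_j,\zeta}$ for all $j$ and $\zeta\in\mathbb R$, $\rho_{\mathcal E_j,\zeta}$ being the Gibbs state of $H_{\mathcal E_j}$ at $\beta_{\rm ref}-\zeta$ (under (ER$\sharp$) $\rho_{+,0}$ is positive definite, so $H'_{\mathcal S}$ is well defined). *)

From HB Require Import structures.
From mathcomp Require Import all_boot all_order all_algebra.
From mathcomp Require Import spectral.
From mathcomp Require Import boolp reals.
From mathcomp.analysis Require Import sequences exp trigo.
From mathcomp.real_closed Require Import complex mxtens.

Set Implicit Arguments.
Unset Strict Implicit.
Unset Printing Implicit Defensive.

Import Order.TTheory GRing.Theory Num.Theory.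
Local Open Scope ring_scope.
Local Open Scope complex_scope.

Section QDefs.
Context {R : realType}.
Local Notation C := (R[i]).

Definition adjmx m n (A : 'M[C]_(m, n)) : 'M[C]_(n, m) := (map_mx Num.conj A)^T.

Definition selfadj n (A : 'M[C]_n) : Prop := adjmx A = A.

Definition psd n (A : 'M[C]_n) : Prop :=
  forall v : 'cV[C]_n, 0 <= (adjmx v *m A *m v) 0 0.

Definition is_state n (A : 'M[C]_n) : Prop :=
  selfadj A /\ psd A /\ \tr A = 1.

Definition spec_dec n (A : 'M[C]_n) (p : 'M[C]_n * ('I_n -> R)) : Prop :=
  p.1 \is unitarymx /\ A = adjmx p.1 *m diag_mx (\row_i (p.2 i)%:C) *m p.1.

(** Functional calculus f(A) = U^* diag(f d) U of a self-adjoint matrix A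
    (defined via a chosen spectral decomposition; 0 if A is not self-adjoint). *)
Definition mxfun n (f : R -> C) (A : 'M[C]_n) : 'M[C]_n :=
  match pselect (exists p, spec_dec A p) with
  | left H => let p := projT1 (cid H) in
              adjmx p.1 *m diag_mx (\row_i f (p.2 i)) *m p.1
  | right _ => 0
  end.

Definition expi (x : R) : C := (cos x +i* sin x).

Definition gibbs n (b : R) (H : 'M[C]_n) : 'M[C]_n :=
  let X := mxfun (fun x => (expR (- (b * x)))%:C) H in (\tr X)^-1 *: X.

Definition ptrace2 m n (X : 'M[C]_(m * n)) : 'M[C]_m :=
  \matrix_(i, j) \sum_(k < n) X (mxtens_index (i, k)) (mxtens_index (j, k)).

Definition Uint dS dE (HS : 'M[C]_dS) (HE : 'M[C]_dE) (V : 'M[C]_(dS * dE))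
    (tau : R) : 'M[C]_(dS * dE) :=
  mxfun (fun x => expi (- (tau * x))) (HS *t 1%:M + 1%:M *t HE + V).

Definition Lrep dS dE (U : 'M[C]_(dS * dE)) (rhoE : 'M[C]_dE) (rho : 'M[C]_dS)
  : 'M[C]_dS := ptrace2 (U *m (rho *t rhoE) *m adjmx U).

Definition primitive n (L : 'M[C]_n -> 'M[C]_n) : Prop :=
  exists (Ks : seq 'M[C]_n) (k : nat),
    (forall X, L X = \sum_(K <- Ks) K *m X *m adjmx K) /\
    (forall A : 'M[C]_n, exists c : k.-tuple 'I_(size Ks) -> C,
       A = \sum_(w : k.-tuple 'I_(size Ks))
             c w *: foldr mulmx 1%:M [seq Ks`_(nat_of_ord a) | a <- w]).

Section Family.
Variables (dS M : nat) (dE : 'I_M -> nat) (HS : 'M[C]_dS)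
  (HE : forall j, 'M[C]_(dE j)) (V : forall j, 'M[C]_(dS * dE j))
  (tau : 'I_M -> R) (beta : R).

Definition Uj (j : 'I_M) : 'M[C]_(dS * dE j) := Uint HS (HE j) (V j) (tau j).

Definition rhoE (j : 'I_M) (z : R) : 'M[C]_(dE j) := gibbs (beta - z) (HE j).

Definition Lj (j : 'I_M) (z : R) (rho : 'M[C]_dS) : 'M[C]_dS :=
  Lrep (Uj j) (rhoE j z) rho.

Definition Lcy (zeta : 'I_M -> R) (rho : 'M[C]_dS) : 'M[C]_dS :=
  foldl (fun r j => Lj j (zeta j) r) rho (enum 'I_M).

Definition Lra (zeta : 'I_M -> R) (rho : 'M[C]_dS) : 'M[C]_dS :=
  (M%:R)^-1 *: \sum_(j < M) Lj j (zeta j) rho.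

End Family.

End QDefs.

(* By (NE) at zeta = 0, U_j commutes with rho_{+,0} (x) rho_{E_j,0}, hence with every
   function of it, both being diagonal in a common basis. Under (ER) rho_{+,0} is faithful:
   otherwise K (x) 1, with K the projection onto its kernel, is such a function, so every
   L_j, hence L_cy and L_ra, preserves the operators supported on the range of rho_{+,0};
   but a primitive channel has no invariant projection other than 0 and 1. Since log turns
   a tensor product of positive operators into a sum, e^{-itH'_S} (x) e^{-itH'_{E_j}} with
   H'_{E_j} = -beta^{-1} log rho_{E_j,0} is again a function of rho_{+,0} (x) rho_{E_j,0},
   so it commutes with U_j; its environment factor commutes with every Gibbs state of
   H_{E_j} and is unitary, so it passes through the partial trace. *)

From mathcomp Require Import all_boot all_order all_algebra.
From mathcomp Require Import spectral.
From mathcomp Require Import boolp reals.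
From mathcomp.analysis Require Import sequences exp trigo.
From mathcomp.real_closed Require Import complex mxtens.
Import Order.TTheory GRing.Theory Num.Theory.
Local Open Scope ring_scope.
Local Open Scope complex_scope.

Set Implicit Arguments.
Unset Strict Implicit.
Unset Printing Implicit Defensive.

Section TensorIndex.
Variable T : pzRingType.

Lemma mxtens_index_eq m n (a c : 'I_m) (b d : 'I_n) :
  (mxtens_index (a, b) == mxtens_index (c, d)) = (a == c) && (b == d).
Proof. by rewrite (inj_eq (can_inj (@mxtens_indexK m n))) xpair_eqE. Qed.

Lemma sum_mxtens_index m n (F : 'I_(m * n) -> T) :
  \sum_k F k = \sum_(a < m) \sum_(b < n) F (mxtens_index (a, b)).
Proof.
rewrite pair_big /= (reindex (@mxtens_index m n)) /=; first by apply: eq_bigr => -[a b].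
by exists (@mxtens_unindex m n) => x _; [apply: mxtens_indexK | apply: mxtens_unindexK].
Qed.

Lemma sum_delta_mul n (k : 'I_n) (F : 'I_n -> T) :
  \sum_(b < n) (k == b)%:R * F b = F k.
Proof.
rewrite (bigD1 k) //= eqxx mul1r big1 ?addr0 // => b /negPf.
by rewrite eq_sym => ->; rewrite mul0r.
Qed.

Lemma tensmx11 m n : (1%:M : 'M[T]_m) *t (1%:M : 'M[T]_n) = 1%:M.
Proof.
apply/matrixP=> i j.
case: (mxtens_indexP i) => a b; case: (mxtens_indexP j) => c d.
by rewrite tensmxE !mxE mxtens_index_eq -natrM mulnb.
Qed.

Lemma tensmx_diag m n (x : 'I_m -> T) (y : 'I_n -> T) :
  diag_mx (\row_a x a) *t diag_mx (\row_b y b)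
  = diag_mx (\row_k (x (mxtens_unindex k).1 * y (mxtens_unindex k).2)).
Proof.
apply/matrixP=> i j.
case: (mxtens_indexP i) => a b; case: (mxtens_indexP j) => c d.
rewrite tensmxE !mxE mxtens_index_eq mxtens_indexK /=.
by case: (a == c); case: (b == d); rewrite ?mulr1n ?mulr0n ?mulr0 ?mul0r.
Qed.

Lemma mul_tensmx_mxE m n p q r (A : 'M[T]_(m, n)) (B : 'M[T]_(p, q))
    (Z : 'M[T]_(n * q, r)) i k c :
  ((A *t B) *m Z) (mxtens_index (i, k)) c
  = \sum_(a < n) \sum_(b < q) A i a * B k b * Z (mxtens_index (a, b)) c.
Proof.
rewrite mxE sum_mxtens_index; apply: eq_bigr => a _; apply: eq_bigr => b _.
by rewrite tensmxE.
Qed.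

Lemma mul_mx_tensmxE m n p q r (A : 'M[T]_(m, n)) (B : 'M[T]_(p, q))
    (Z : 'M[T]_(r, m * p)) i k c :
  (Z *m (A *t B)) c (mxtens_index (i, k))
  = \sum_(a < m) \sum_(b < p) Z c (mxtens_index (a, b)) * A a i * B b k.
Proof.
rewrite mxE sum_mxtens_index; apply: eq_bigr => a _; apply: eq_bigr => b _.
by rewrite tensmxE mulrA.
Qed.

End TensorIndex.

Lemma diag_intertwine (K : idomainType) m n (Y : 'M[K]_(m, n))
    (d1 e1 : 'I_n -> K) (d2 e2 : 'I_m -> K) :
  (forall i j, d2 i = d1 j -> e2 i = e1 j) ->
  Y *m diag_mx (\row_j d1 j) = diag_mx (\row_i d2 i) *m Y ->
  Y *m diag_mx (\row_j e1 j) = diag_mx (\row_i e2 i) *m Y.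
Proof.
move=> de /matrixP E; apply/matrixP=> i j; have := E i j.
rewrite !mul_mx_diag !mul_diag_mx !mxE => Eij.
have [->|Y0] := eqVneq (Y i j) 0; first by rewrite mulr0 mul0r.
have d21 : d2 i = d1 j by apply: (mulIf Y0); rewrite -Eij mulrC.
by rewrite (de i j d21) mulrC.
Qed.

Lemma sandwich_mx_eq0 (K : idomainType) m n p q
    (X : 'M[K]_(m, n)) (Y : 'M[K]_(p, q)) :
  (forall A : 'M_(n, p), X *m A *m Y = 0) -> X = 0 \/ Y = 0.
Proof.
move=> XAY; have [->|nzY] := eqVneq Y 0; [by right | left].
have /existsP[l /existsP[j Ylj]] : [exists l, exists j, Y l j != 0].
  apply: contraR nzY => /existsPn Y0; apply/eqP/matrixP => l j.
  by have /existsPn/(_ j) := Y0 l; rewrite negbK mxE => /eqP.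
apply/matrixP=> i k; have /matrixP/(_ i j) := XAY (delta_mx k l).
rewrite -(mul_delta_mx (0 : 'I_1)) mulmxA -mulmxA -colE -rowE !mxE big_ord1 !mxE.
by move/eqP; rewrite mulf_eq0 (negPf Ylj) orbF => /eqP.
Qed.

Section Adjoint.
Variable R : realType.
Local Notation C := R[i].

Lemma adjmxE m n (A : 'M[C]_(m, n)) i j : adjmx A i j = Num.conj (A j i).
Proof. by rewrite !mxE. Qed.

Lemma adjmxK m n (A : 'M[C]_(m, n)) : adjmx (adjmx A) = A.
Proof. by apply/matrixP=> i j; rewrite !adjmxE conjCK. Qed.

Lemma adjmxM m n p (A : 'M[C]_(m, n)) (B : 'M[C]_(n, p)) :
  adjmx (A *m B) = adjmx B *m adjmx A.
Proof.
apply/matrixP=> i j; rewrite adjmxE !mxE rmorph_sum; apply: eq_bigr => k _.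
by rewrite !adjmxE rmorphM mulrC.
Qed.

Lemma adjmxD m n (A B : 'M[C]_(m, n)) : adjmx (A + B) = adjmx A + adjmx B.
Proof. by apply/matrixP=> i j; rewrite !mxE rmorphD. Qed.

Lemma adjmxB m n (A B : 'M[C]_(m, n)) : adjmx (A - B) = adjmx A - adjmx B.
Proof. by apply/matrixP=> i j; rewrite !mxE rmorphB. Qed.

Lemma adjmx1 n : adjmx (1%:M : 'M[C]_n) = 1%:M.
Proof. by apply/matrixP=> i j; rewrite !mxE rmorph_nat eq_sym. Qed.

Lemma adjmx_delta m n (a : 'I_m) (b : 'I_n) :
  adjmx (delta_mx a b : 'M[C]_(m, n)) = delta_mx b a.
Proof. by apply/matrixP=> i j; rewrite !mxE rmorph_nat andbC. Qed.

Lemma adjmx_diag n (d : 'I_n -> C) :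
  adjmx (diag_mx (\row_i d i)) = diag_mx (\row_i Num.conj (d i)).
Proof.
apply/matrixP=> i j; rewrite adjmxE !mxE eq_sym.
by case: eqVneq => [->|_]; rewrite ?mulr1n ?mulr0n ?conjC0.
Qed.

Lemma adjmx_tens m n p q (A : 'M[C]_(m, n)) (B : 'M[C]_(p, q)) :
  adjmx (A *t B) = adjmx A *t adjmx B.
Proof. by apply/matrixP=> i j; rewrite adjmxE !mxE rmorphM. Qed.

Lemma unitarymx_adjP n (P : 'M[C]_n) :
  reflect (P *m adjmx P = 1%:M) (P \is unitarymx).
Proof. by rewrite /adjmx map_trmx; apply: unitarymxP. Qed.

Lemma unitarymx_adjK n (P : 'M[C]_n) : P \is unitarymx -> adjmx P *m P = 1%:M.
Proof. by move/unitarymx_adjP; apply: mulmx1C. Qed.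

Lemma tensmx_unitary m n (P : 'M[C]_m) (Q : 'M[C]_n) :
  P \is unitarymx -> Q \is unitarymx -> P *t Q \is unitarymx.
Proof.
move=> /unitarymx_adjP uP /unitarymx_adjP uQ; apply/unitarymx_adjP.
by rewrite adjmx_tens tensmx_mul uP uQ tensmx11.
Qed.

Lemma unitary_conj_comm n (U A : 'M[C]_n) :
  U \is unitarymx -> U *m A *m adjmx U = A -> comm_mx U A.
Proof. by move=> /unitarymx_adjK uU E; rewrite /comm_mx -{2}E -!mulmxA uU mulmx1. Qed.

Lemma comm_mx_adj n (U A : 'M[C]_n) :
  adjmx A = A -> comm_mx U A -> comm_mx (adjmx U) A.
Proof. by move=> sA UA; rewrite /comm_mx -[in LHS]sA -[in RHS]sA -!adjmxM UA. Qed.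

End Adjoint.

Section UnitaryDiag.
Variable R : realType.
Local Notation C := R[i].

Definition udiag n (P : 'M[C]_n) (d : 'I_n -> C) : 'M[C]_n :=
  adjmx P *m diag_mx (\row_i d i) *m P.

Lemma spec_decE n (A : 'M[C]_n) P h : spec_dec A (P, h) -> A = udiag P (fun i => (h i)%:C).
Proof. by case. Qed.

Lemma adjmx_udiag n (P : 'M[C]_n) d :
  adjmx (udiag P d) = udiag P (fun i => Num.conj (d i)).
Proof. by rewrite /udiag !adjmxM adjmxK adjmx_diag mulmxA. Qed.

Lemma scale_udiag n (P : 'M[C]_n) c d : c *: udiag P d = udiag P (fun i => c * d i).
Proof.
rewrite /udiag scalemxAl scalemxAr; congr (_ *m _ *m _).
by apply/matrixP=> i j; rewrite !mxE mulrnAr.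
Qed.

Lemma tensmx_udiag m n (P : 'M[C]_m) (Q : 'M[C]_n) d e :
  udiag P d *t udiag Q e
  = udiag (P *t Q) (fun k => d (mxtens_unindex k).1 * e (mxtens_unindex k).2).
Proof. by rewrite /udiag -!tensmx_mul adjmx_tens tensmx_diag. Qed.

Section UnitaryBasis.
Variables (n : nat) (P : 'M[C]_n).
Hypothesis uP : P \is unitarymx.

Lemma udiag_mul d e : udiag P d *m udiag P e = udiag P (fun i => d i * e i).
Proof.
rewrite /udiag -!mulmxA (mulmxA P) (unitarymx_adjP _ uP) mul1mx !mulmxA.
rewrite -(mulmxA (adjmx P)) mulmx_diag; congr (_ *m diag_mx _ *m _).
by apply/rowP=> i; rewrite !mxE.
Qed.

Lemma udiag_const c : udiag P (fun=> c) = c%:M.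
Proof.
rewrite /udiag; have -> : diag_mx (\row_(i < n) c) = c%:M.
  by apply/matrixP=> i j; rewrite !mxE.
by rewrite mul_mx_scalar -scalemxAl unitarymx_adjK // scalemx1.
Qed.

Lemma mxtrace_udiag d : \tr (udiag P d) = \sum_i d i.
Proof.
rewrite /udiag mxtrace_mulC mulmxA (unitarymx_adjP _ uP) mul1mx mxtrace_diag.
by apply: eq_bigr => i _; rewrite mxE.
Qed.

Lemma udiag_unitary d : (forall i, Num.conj (d i) * d i = 1) -> udiag P d \is unitarymx.
Proof.
move=> dK; apply/unitarymx_adjP; rewrite adjmx_udiag udiag_mul -(udiag_const 1).
by congr udiag; apply/funext=> i; rewrite mulrC dK.
Qed.

Definition kerproj (p : 'I_n -> R) : 'M[C]_n := udiag P (fun i => (p i == 0)%:R).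

Lemma kerproj_idem p : kerproj p *m kerproj p = kerproj p.
Proof. by rewrite udiag_mul; congr udiag; apply/funext=> i; rewrite -natrM mulnb andbb. Qed.

Lemma kerproj_adj p : adjmx (kerproj p) = kerproj p.
Proof. by rewrite adjmx_udiag; congr udiag; apply/funext=> i; rewrite rmorph_nat. Qed.

Lemma udiag_kerproj p : udiag P (fun i => (p i)%:C) *m kerproj p = 0.
Proof.
rewrite udiag_mul (_ : (fun i => _) = fun=> 0) ?udiag_const ?raddf0 //.
by apply/funext=> i; case: eqP => [->|]; rewrite ?mul0r ?mulr0.
Qed.

Lemma kerproj_neq0 p i : p i = 0 -> kerproj p != 0.
Proof.
move=> pi0; apply/eqP=> /(congr1 (fun K => P *m K *m adjmx P)).
rewrite mulmx0 mul0mx /kerproj /udiag !mulmxA (unitarymx_adjP _ uP) mul1mx.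
rewrite -mulmxA (unitarymx_adjP _ uP) mulmx1 => /matrixP/(_ i i).
by rewrite !mxE pi0 !eqxx mulr1n => /eqP; rewrite oner_eq0.
Qed.

End UnitaryBasis.

Lemma udiag_intertwine m n (P : 'M[C]_n) (Q : 'M[C]_m) (X : 'M[C]_(m, n)) d1 e1 d2 e2 :
  P \is unitarymx -> Q \is unitarymx ->
  (forall i j, d2 i = d1 j -> e2 i = e1 j) ->
  X *m udiag P d1 = udiag Q d2 *m X -> X *m udiag P e1 = udiag Q e2 *m X.
Proof.
move=> uP uQ de XPQ; set Y := Q *m X *m adjmx P.
have YD f : Y *m diag_mx (\row_j f j) = Q *m (X *m udiag P f) *m adjmx P.
  by rewrite /Y /udiag !mulmxA -(mulmxA _ P) (unitarymx_adjP _ uP) mulmx1.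
have DY f : diag_mx (\row_i f i) *m Y = Q *m (udiag Q f *m X) *m adjmx P.
  by rewrite /Y /udiag !mulmxA (unitarymx_adjP _ uQ) mul1mx.
have conjK A B : Q *m A *m adjmx P = Q *m B *m adjmx P -> A = B.
  move=> /(congr1 (fun Z => adjmx Q *m Z *m P)).
  by rewrite !mulmxA !unitarymx_adjK // !mul1mx -!mulmxA !unitarymx_adjK // !mulmx1.
by apply: conjK; rewrite -YD -DY; apply: diag_intertwine de _; rewrite YD DY XPQ.
Qed.

Lemma spec_dec_exists n (A : 'M[C]_n) : selfadj A -> exists p, spec_dec A p.
Proof.
move=> sA.
have hA : A \is hermsymmx.
  apply/is_hermitianmxP; rewrite expr0 scale1r -map_trmx.
  by rewrite -{1}sA.
have /mxOverP re := hermitian_spectral_diag_real hA.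
have /orthomx_spectralP AE := hermitian_normalmx hA.
move: AE re; set S := spectralmx A; set d := spectral_diag A => AE re.
have uS : S \is unitarymx by exact: spectral_unitarymx.
exists (S, fun i => complex.Re (d 0 i)); split; first exact: uS.
rewrite {1}AE; have -> : invmx S = adjmx S by rewrite invmx_unitary // /adjmx map_trmx.
rewrite /=; congr (_ *m diag_mx _ *m _).
by apply/rowP=> i; rewrite !mxE RRe_real.
Qed.

Lemma mxfun_udiag n f (A : 'M[C]_n) P h : spec_dec A (P, h) ->
  mxfun f A = udiag P (fun i => f (h i)).
Proof.
move=> sp; rewrite /mxfun; case: pselect => [ex|[]]; last by exists (P, h).
case: (cid ex) => -[Q g] sq /=.
have := udiag_intertwine (X := 1%:M) (d1 := fun i => (g i)%:C) (d2 := fun i => (h i)%:C)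
  (e1 := fun i => f (g i)) (e2 := fun i => f (h i)) sq.1 sp.1.
rewrite !mul1mx !mulmx1 -(spec_decE sq) -(spec_decE sp) => <- //.
by move=> i j [->].
Qed.

Lemma expiD (x y : R) : expi x * expi y = expi (x + y).
Proof.
by rewrite /expi; simpc; rewrite cosD sinD; congr (_ +i* _); rewrite addrC.
Qed.

Lemma expi_conjK (x : R) : Num.conj (expi x) * expi x = 1.
Proof. by rewrite /expi /=; simpc; rewrite -!expr2 cos2Dsin2 mulrC subrr. Qed.

Definition gibbs_weight n (b : R) (h : 'I_n -> R) (i : 'I_n) : R :=
  expR (- (b * h i)) / \sum_k expR (- (b * h k)).

Lemma gibbs_weight_gt0 n b (h : 'I_n -> R) i : 0 < gibbs_weight b h i.
Proof.
rewrite divr_gt0 ?expR_gt0 // (bigD1 i) //= ltr_wpDr ?expR_gt0 //.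
by apply: sumr_ge0 => k _; rewrite ltW ?expR_gt0.
Qed.

Lemma gibbs_udiag n b (A : 'M[C]_n) Q h : spec_dec A (Q, h) ->
  gibbs b A = udiag Q (fun i => (gibbs_weight b h i)%:C).
Proof.
move=> sp; rewrite /gibbs (mxfun_udiag _ sp) mxtrace_udiag ?sp.1 // scale_udiag.
congr udiag; apply/funext=> i.
by rewrite /gibbs_weight -rmorph_sum -fmorphV -rmorphM mulrC.
Qed.

Lemma psd_spec_ge0 n (A : 'M[C]_n) P p :
  psd A -> spec_dec A (P, p) -> forall a, 0 <= p a.
Proof.
move=> psdA [/= uP AE] a.
have PAP : P *m A *m adjmx P = diag_mx (\row_i (p i)%:C).
  by rewrite AE !mulmxA (unitarymx_adjP _ uP) mul1mx -mulmxA (unitarymx_adjP _ uP) mulmx1.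
have := psdA (adjmx P *m delta_mx a 0).
rewrite adjmxM adjmxK adjmx_delta.
have -> : delta_mx 0 a *m P *m A *m (adjmx P *m delta_mx a 0)
    = delta_mx (0 : 'I_1) a *m (P *m A *m adjmx P) *m delta_mx a (0 : 'I_1).
  by rewrite !mulmxA.
by rewrite PAP -rowE -colE !mxE eqxx mulr1n lecR.
Qed.

End UnitaryDiag.

Section PartialTrace.
Variable R : realType.
Local Notation C := R[i].

Lemma ptrace2_0 m n : ptrace2 (0 : 'M[C]_(m * n)) = 0.
Proof. by apply/matrixP=> i j; rewrite !mxE big1 // => k _; rewrite mxE. Qed.

Lemma ptrace2_tensmx1_mull m n (A : 'M[C]_m) (Z : 'M[C]_(m * n)) :
  ptrace2 ((A *t 1%:M) *m Z) = A *m ptrace2 Z.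
Proof.
apply/matrixP=> i j; rewrite !mxE.
under eq_bigr => k _ do rewrite mul_tensmx_mxE.
under [RHS]eq_bigr => a _ do rewrite mxE big_distrr /=.
rewrite exchange_big /=; apply: eq_bigr => a _; apply: eq_bigr => k _.
rewrite -(sum_delta_mul k (fun b => A i a * Z (mxtens_index (a, b)) (mxtens_index (j, k)))).
by apply: eq_bigr => b _; rewrite mxE mulrAC mulrC.
Qed.

Lemma ptrace2_tensmx1_mulr m n (A : 'M[C]_m) (Z : 'M[C]_(m * n)) :
  ptrace2 (Z *m (A *t 1%:M)) = ptrace2 Z *m A.
Proof.
apply/matrixP=> i j; rewrite !mxE.
under eq_bigr => k _ do rewrite mul_mx_tensmxE.
under [RHS]eq_bigr => a _ do rewrite mxE big_distrl /=.
rewrite exchange_big /=; apply: eq_bigr => a _; apply: eq_bigr => k _.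
rewrite -(sum_delta_mul k (fun b => Z (mxtens_index (i, k)) (mxtens_index (a, b)) * A a j)).
by apply: eq_bigr => b _; rewrite mxE eq_sym mulrC mulrA.
Qed.

Lemma ptrace2_tens1mxC m n (B : 'M[C]_n) (Z : 'M[C]_(m * n)) :
  ptrace2 ((1%:M *t B) *m Z) = ptrace2 (Z *m (1%:M *t B)).
Proof.
apply/matrixP=> i j; rewrite !mxE.
transitivity (\sum_k \sum_b B k b * Z (mxtens_index (i, b)) (mxtens_index (j, k))).
  apply: eq_bigr => k _; rewrite mul_tensmx_mxE exchange_big /=; apply: eq_bigr => b _.
  rewrite -(sum_delta_mul i (fun a => B k b * Z (mxtens_index (a, b)) (mxtens_index (j, k)))).
  by apply: eq_bigr => a _; rewrite mxE mulrA.
transitivity (\sum_k \sum_b Z (mxtens_index (i, k)) (mxtens_index (j, b)) * B b k); last first.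
  apply: eq_bigr => k _; rewrite mul_mx_tensmxE exchange_big /=; apply: eq_bigr => b _.
  rewrite -(sum_delta_mul j (fun a => Z (mxtens_index (i, k)) (mxtens_index (a, b)) * B b k)).
  by apply: eq_bigr => a _; rewrite mxE eq_sym mulrAC mulrC.
by rewrite exchange_big /=; apply: eq_bigr => b _; apply: eq_bigr => k _; rewrite mulrC.
Qed.

Lemma ptrace2_conj_tens m n (W : 'M[C]_m) (V : 'M[C]_n) (Y : 'M[C]_(m * n)) :
  V \is unitarymx ->
  ptrace2 ((W *t V) *m Y *m adjmx (W *t V)) = W *m ptrace2 Y *m adjmx W.
Proof.
move=> /unitarymx_adjK uV; rewrite tensmx_decr adjmxM !adjmx_tens !adjmx1.
rewrite !mulmxA ptrace2_tensmx1_mulr -!mulmxA ptrace2_tensmx1_mull ptrace2_tens1mxC.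
by rewrite -[Y *m _ *m _]mulmxA tensmx_mul mulmx1 uV tensmx11 mulmx1 mulmxA.
Qed.

End PartialTrace.

Section Channel.
Variable R : realType.
Local Notation C := R[i].

Definition annihilated n (K Y : 'M[C]_n) : Prop := K *m Y = 0 /\ Y *m K = 0.

Lemma Lrep_annihilated dS dE (U : 'M[C]_(dS * dE)) (rhoE : 'M[C]_dE) (K Y : 'M[C]_dS) :
  adjmx K = K -> comm_mx U (K *t 1%:M) ->
  annihilated K Y -> annihilated K (Lrep U rhoE Y).
Proof.
move=> sK UK [KY YK].
have UK' : comm_mx (adjmx U) (K *t 1%:M).
  by apply: comm_mx_adj; rewrite // adjmx_tens sK adjmx1.
rewrite /Lrep; split.
  rewrite -ptrace2_tensmx1_mull !mulmxA -UK -(mulmxA U) tensmx_mul KY mul1mx.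
  by rewrite tens0mx mulmx0 mul0mx ptrace2_0.
rewrite -ptrace2_tensmx1_mulr -mulmxA UK' mulmxA -(mulmxA U) tensmx_mul YK mulmx1.
by rewrite tens0mx mulmx0 mul0mx ptrace2_0.
Qed.

Lemma Lrep_covariant dS dE (U : 'M[C]_(dS * dE)) (rhoE : 'M[C]_dE)
    (W : 'M[C]_dS) (WE : 'M[C]_dE) (rho : 'M[C]_dS) :
  WE \is unitarymx -> WE *m rhoE *m adjmx WE = rhoE -> comm_mx U (W *t WE) ->
  Lrep U rhoE (W *m rho *m adjmx W) = W *m Lrep U rhoE rho *m adjmx W.
Proof.
move=> uWE WErhoE UW.
have UW' : comm_mx (adjmx U) (adjmx (W *t WE)) by rewrite /comm_mx -!adjmxM UW.
rewrite /Lrep -(ptrace2_conj_tens W _ uWE).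
have -> : (W *m rho *m adjmx W) *t rhoE = (W *t WE) *m (rho *t rhoE) *m adjmx (W *t WE).
  by rewrite adjmx_tens !tensmx_mul WErhoE.
congr ptrace2.
by rewrite !mulmxA UW -!mulmxA -UW' !mulmxA.
Qed.

Lemma mxtrace_mul_adj m n (B : 'M[C]_(m, n)) :
  \tr (B *m adjmx B) = \sum_i \sum_j `|B i j| ^+ 2.
Proof.
apply: eq_bigr => i _; rewrite mxE; apply: eq_bigr => j _.
by rewrite adjmxE normCK.
Qed.

Lemma sum_mul_adj_eq0 m n (I : eqType) (s : seq I) (B : I -> 'M[C]_(m, n)) :
  \sum_(x <- s) B x *m adjmx (B x) = 0 -> forall x, x \in s -> B x = 0.
Proof.
have sq_ge0 (A : 'M[C]_(m, n)) i : 0 <= \sum_j `|A i j| ^+ 2.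
  by apply: sumr_ge0 => j _; apply: exprn_ge0.
move=> /(congr1 mxtrace).
rewrite mxtrace0 (big_morph _ (@mxtraceD _ _) (@mxtrace0 _ _)) => /eqP.
rewrite psumr_eq0 => [/allP tr0 x sx|x _]; last first.
  by rewrite mxtrace_mul_adj; apply: sumr_ge0 => i _.
apply/matrixP=> i j; move/eqP: (tr0 x sx); rewrite mxtrace_mul_adj.
move=> /(psumr_eq0P (fun i _ => sq_ge0 _ i))/(_ i isT).
move=> /(psumr_eq0P (fun j _ => exprn_ge0 _ (normr_ge0 _)))/(_ j isT)/eqP.
by rewrite mxE sqrf_eq0 normr_eq0 => /eqP.
Qed.

Lemma primitive_invariant_proj n (L : 'M[C]_n -> 'M[C]_n) (Pi : 'M[C]_n) :
  primitive L -> Pi *m Pi = Pi -> adjmx Pi = Pi -> (1%:M - Pi) *m L Pi = 0 ->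
  Pi = 0 \/ Pi = 1%:M.
Proof.
move=> [Ks [k [LE span]]] idPi sPi LPi; set Pi' := 1%:M - Pi in LPi.
have sPi' : adjmx Pi' = Pi' by rewrite adjmxB adjmx1 sPi.
have PiD : Pi + Pi' = 1%:M by rewrite /Pi' (addrC Pi) subrK.
have Pi'Pi : Pi' *m Pi = 0 by rewrite mulmxBl mul1mx idPi subrr.
clearbody Pi'.
have Kinv K : K \in Ks -> Pi' *m K *m Pi = 0.
  move=> KKs; apply: (sum_mul_adj_eq0 (B := fun K => Pi' *m K *m Pi) _ KKs).
  transitivity (Pi' *m L Pi *m Pi'); last by rewrite LPi mul0mx.
  rewrite LE mulmx_sumr mulmx_suml; apply: eq_bigr => K' _.
  by rewrite !adjmxM sPi sPi' !mulmxA -(mulmxA _ Pi Pi) idPi.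
have prod_inv (w : seq 'I_(size Ks)) :
    Pi' *m foldr mulmx 1%:M [seq Ks`_(nat_of_ord a) | a <- w] *m Pi = 0.
  elim: w => [|a w IHw] /=; first by rewrite mulmx1.
  set F := foldr _ _ _ in IHw *.
  have -> : Pi' *m (Ks`_a *m F) *m Pi = Pi' *m Ks`_a *m ((Pi + Pi') *m F *m Pi).
    by rewrite PiD mul1mx !mulmxA.
  rewrite !mulmxDl mulmxDr IHw mulmx0 addr0 !mulmxA.
  by rewrite (Kinv _ (mem_nth 0 (ltn_ord a))) !mul0mx.
have all_inv A : Pi' *m A *m Pi = 0.
  have [c ->] := span A; rewrite mulmx_sumr mulmx_suml big1 // => w _.
  by rewrite -scalemxAr -scalemxAl prod_inv scaler0.
case: (sandwich_mx_eq0 all_inv) => [Pi'0|]; last by left.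
by right; rewrite -PiD Pi'0 addr0.
Qed.

End Channel.

Section Covariance.
Variables (R : realType) (dS M : nat) (dE : 'I_M -> nat)
  (HS : 'M[R[i]]_dS) (HE : forall j, 'M[R[i]]_(dE j))
  (V : forall j, 'M[R[i]]_(dS * dE j)) (tau : 'I_M -> R) (beta : R)
  (rhoP : R -> 'M[R[i]]_dS).
Hypotheses (sHS : selfadj HS) (sHE : forall j, selfadj (HE j))
  (sV : forall j, selfadj (V j)).
Hypothesis NE0 : forall j : 'I_M,
  Uj HS HE V tau j *m (rhoP 0 *t rhoE HE beta j 0) *m adjmx (Uj HS HE V tau j)
  = rhoP 0 *t rhoE HE beta j 0.

Local Notation U j := (Uj HS HE V tau j).

Lemma Uj_unitary j : U j \is unitarymx.
Proof.
have sH : selfadj (HS *t 1%:M + 1%:M *t HE j + V j).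
  by rewrite /selfadj !adjmxD !adjmx_tens !adjmx1 sHS sHE sV.
have [[Q h] sp] := spec_dec_exists sH.
by rewrite /Uj /Uint (mxfun_udiag _ sp) udiag_unitary ?sp.1 // => i; apply: expi_conjK.
Qed.

Lemma Uj_comm_udiag j P p Q h (F : 'I_dS -> R[i]) (G : 'I_(dE j) -> R[i]) :
  spec_dec (rhoP 0) (P, p) -> spec_dec (HE j) (Q, h) ->
  (forall a b a' b', p a * gibbs_weight beta h b = p a' * gibbs_weight beta h b' ->
     F a * G b = F a' * G b') ->
  comm_mx (U j) (udiag P F *t udiag Q G).
Proof.
move=> spP spQ FG; have uPQ := tensmx_unitary spP.1 spQ.1.
have := NE0 j; rewrite /rhoE subr0 (gibbs_udiag _ spQ) (spec_decE spP) tensmx_udiag.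
move=> /(unitary_conj_comm (Uj_unitary j)) Ucomm; rewrite tensmx_udiag.
by apply: (udiag_intertwine uPQ uPQ _ Ucomm) => k k'; rewrite -!rmorphM => -[/FG].
Qed.

Lemma Uj_comm_kerproj j P p :
  spec_dec (rhoP 0) (P, p) -> comm_mx (U j) (kerproj P p *t 1%:M).
Proof.
move=> spP; have [[Q h] spQ] := spec_dec_exists (sHE j).
rewrite -(udiag_const spQ.1 1); apply: Uj_comm_udiag spP spQ _ => a b a' b' e.
have := congr1 (eq_op^~ 0) e; rewrite !mulr1 !(mulf_eq0 (p _)).
by rewrite !(gt_eqF (gibbs_weight_gt0 _ _ _)) !orbF => ->.
Qed.

Lemma Lcy_annihilated zeta K Y :
  adjmx K = K -> (forall j, comm_mx (U j) (K *t 1%:M)) -> annihilated K Y ->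
  annihilated K (Lcy HS HE V tau beta zeta Y).
Proof.
move=> sK UK; rewrite /Lcy; elim: (enum 'I_M) Y => [|j s IHs] Y //= KY.
by apply: IHs; apply: Lrep_annihilated.
Qed.

Lemma Lra_annihilated zeta K Y :
  adjmx K = K -> (forall j, comm_mx (U j) (K *t 1%:M)) -> annihilated K Y ->
  annihilated K (Lra HS HE V tau beta zeta Y).
Proof.
move=> sK UK KY.
have Lj_ann j := Lrep_annihilated (rhoE HE beta j (zeta j)) sK (UK j) KY.
rewrite /Lra; split.
  by rewrite -scalemxAr mulmx_sumr big1 ?scaler0 // => j _; case: (Lj_ann j).
by rewrite -scalemxAl mulmx_suml big1 ?scaler0 // => j _; case: (Lj_ann j).
Qed.

Hypothesis ER : (exists zeta, primitive (Lcy HS HE V tau beta zeta)) \/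
  (exists zeta, primitive (Lra HS HE V tau beta zeta)).
Hypothesis st0 : is_state (rhoP 0).

Lemma rhoP0_spec_gt0 P p : spec_dec (rhoP 0) (P, p) -> forall a, 0 < p a.
Proof.
move=> spP a; rewrite lt_def (psd_spec_ge0 st0.2.1 spP) andbT; apply/eqP => pa0.
have uP : P \is unitarymx := spP.1; set K := kerproj P p.
have sK : adjmx K = K by apply: kerproj_adj.
have idK : K *m K = K by apply: kerproj_idem.
have UK j : comm_mx (U j) (K *t 1%:M) := Uj_comm_kerproj j spP.
set Pi := 1%:M - K.
have annPi : annihilated K Pi.
  by split; rewrite ?mulmxBl ?mulmxBr ?mul1mx ?mulmx1 idK subrr.
have idPi : Pi *m Pi = Pi by rewrite mulmxBl mul1mx annPi.1 subr0.
have sPi : adjmx Pi = Pi by rewrite adjmxB adjmx1 sK.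
have : Pi = 0 \/ Pi = 1%:M.
  case: ER => -[zeta prim]; apply: (primitive_invariant_proj prim idPi sPi).
  - by rewrite subKr; case: (Lcy_annihilated zeta sK UK annPi).
  - by rewrite subKr; case: (Lra_annihilated zeta sK UK annPi).
case=> [/eqP|Pi1].
  rewrite subr_eq0 => /eqP K1; have := udiag_kerproj uP p.
  rewrite -(spec_decE spP) -/K -K1 mulmx1 => rho0.
  by have := st0.2.2; rewrite rho0 mxtrace0 => /eqP; rewrite eq_sym oner_eq0.
by have /eqP := kerproj_neq0 uP pa0; rewrite -/K -(subKr 1%:M K) -/Pi Pi1 subrr.
Qed.

Lemma Lj_covariant j z t rho :
  let W := mxfun (fun x => expi (- (t * x)))
             ((- beta^-1)%:C *: mxfun (fun x => (ln x)%:C) (rhoP 0)) in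
  Lj HS HE V tau beta j z (W *m rho *m adjmx W)
  = W *m Lj HS HE V tau beta j z rho *m adjmx W.
Proof.
have [[P p] spP] := spec_dec_exists st0.1.
have [[Q h] spQ] := spec_dec_exists (sHE j).
pose g u := expi (- (t * (- beta^-1 * u))).
have gD u v : g u * g v = g (u + v) by rewrite /g expiD -opprD -mulrDr -mulrDr.
have spH : spec_dec ((- beta^-1)%:C *: mxfun (fun x => (ln x)%:C) (rhoP 0))
    (P, fun a => - beta^-1 * ln (p a)).
  split; first exact: spP.1.
  rewrite /= (mxfun_udiag _ spP) scale_udiag; congr (udiag P _).
  by apply/funext=> a; rewrite rmorphM.
rewrite /= (mxfun_udiag _ spH).
apply: (Lrep_covariant (WE := udiag Q (fun b => g (ln (gibbs_weight beta h b))))).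
- by apply: udiag_unitary => [|b]; [exact: spQ.1 | exact: expi_conjK].
- rewrite /rhoE (gibbs_udiag _ spQ) adjmx_udiag !udiag_mul ?spQ.1 //.
  by congr udiag; apply/funext=> b; rewrite mulrAC [g _ * _]mulrC expi_conjK mul1r.
have pgt0 := rhoP0_spec_gt0 spP.
apply: Uj_comm_udiag spP spQ _ => a b a' b' e; rewrite !gD -!lnM ?posrE ?e //.
all: by rewrite ?pgt0 ?gibbs_weight_gt0.
Qed.

End Covariance.

Theorem mainTheorem10 (R : realType) (dS M : nat) (dE : 'I_M -> nat)
  (HS : 'M[R[i]]_dS) (HE : forall j, 'M[R[i]]_(dE j))
  (V : forall j, 'M[R[i]]_(dS * dE j)) (tau : 'I_M -> R) (beta : R)
  (rhoP : R -> 'M[R[i]]_dS) :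
  selfadj HS -> (forall j, selfadj (HE j)) -> (forall j, selfadj (V j)) ->
  (forall j, 0 < tau j) -> 0 < beta ->
  (* (ER#) for some # in {cy, ra} *)
  ((exists zeta, primitive (Lcy HS HE V tau beta zeta)) \/
   (exists zeta, primitive (Lra HS HE V tau beta zeta))) ->
  (* (NE) *)
  (forall z, is_state (rhoP z)) ->
  (forall (j : 'I_M) (z : R),
     Uj HS HE V tau j *m (rhoP z *t rhoE HE beta j z) *m adjmx (Uj HS HE V tau j)
     = rhoP z *t rhoE HE beta j z) ->
  let H' := (- beta^-1)%:C *: mxfun (fun x => (ln x)%:C) (rhoP 0) in
  let W := fun t : R => mxfun (fun x => expi (- (t * x))) H' in
  forall (j : 'I_M) (z t : R) (rho : 'M[R[i]]_dS),
    Lj HS HE V tau beta j z (W t *m rho *m adjmx (W t))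
    = W t *m Lj HS HE V tau beta j z rho *m adjmx (W t).
Proof.
move=> sHS sHE sV _ _ ER st NE H' W j z t rho.
exact: (Lj_covariant sHS sHE sV (fun j => NE j 0) ER (st 0)).
Qed.
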